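(* Let $X$ be a metrically strictly systolic complex. Then there is a weight function $w$ on the corners of the 2-simplices of $X$ making $(X,w)$ a strictly systolic angled complex.
   Context: A quasi-simplicial complex is a simplicial complex in which multiple edges between two vertices are allowed, but no loops and no 2-simplices with two or more edges in common; complexes are locally finite. It is 3-flag if whenever it contains three faces of a tetrahedron it contains the whole tetrahedron. For a vertex $v$, $\mathrm{lk}(v)$ is the geometric link of $v$ in the 2-skeleton (a graph with a vertex for each edge at $v$ and an edge for each corner at $v$ of a 2-simplex). A metrically strictly systolic complex is a simply connected 3-flag quasi-simplicial complex $X$ whose 2-skeleton carries a piecewise Euclidean metric with finitely many isometry classes of simplices, such that, assigning to each edge of each vertex link the Euclidean angle of the corresponding corner (the angular distance), (a) the weak triangle inequality holds: for every vertex $v$ and edges $\alpha_{12},\alpha_{23},\alpha_{13}$ of $\mathrm{lk}(v)$ with $\alpha_{ij}$ from $v_i$ to $v_j$, the angle of $\alpha_{13}$ is at most the sum of the angles of $\alpha_{12}$ and $\alpha_{23}$; and (b) every 2-full cycle in every vertex link has angular length (sum of angles of its edges) strictly greater than $2\pi$. Here a simple cycle of length $>3$ in $\mathrm{lk}(v)$ is 2-full if no edge of $\mathrm{lk}(v)$ joins two vertices of the cycle having a common neighbour in the cycle. An angled complex is a quasi-simplicial complex $X$ with a weight function $w$ assigning a nonnegative real number to each corner of each 2-simplex, with finite image, satisfying the weak triangle inequality as in (a) with $w$ in place of angles. It is locally $2\pi$-large if every 2-full cycle in every vertex link has $w$-length $\geq 2\pi$. A strictly systolic angled complex is a simply connected,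 locally $2\pi$-large, 3-flag angled complex in which the sum of the three weights of each 2-simplex is $<\pi$. *)

From Stdlib Require Import Reals List.
Open Scope R_scope.

(** * Combinatorial model of a (locally finite) quasi-simplicial complex,
      recorded up to dimension 3 (the only dimensions the statement uses). *)

Inductive i3 : Type := J0 | J1 | J2.
Inductive i4 : Type := K0 | K1 | K2 | K3.

Definition nxt (i : i3) : i3 := match i with J0 => J1 | J1 => J2 | J2 => J0 end.

(** Raw data: vertices, edges (with two endpoints; multiple edges allowed),
    2-simplices (three vertices [fv f i] and three edges [fe f i], the edge
    [fe f i] being opposite to the vertex [fv f i]) and 3-simplices (four
    2-simplices [tf t p] as faces). *)
Record Complex := mkComplex {
  V : Type; E : Type; F : Type; T : Type;
  esrc : E -> V; etgt : E -> V;
  fv : F -> i3 -> V; fe : F -> i3 -> E;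
  tf : T -> i4 -> F
}.

Arguments esrc {_}. Arguments etgt {_}. Arguments fv {_}. Arguments fe {_}.
Arguments tf {_}.

Section Defs.
Variable X : Complex.

Definition joins (e : E X) (a b : V X) : Prop :=
  (esrc e = a /\ etgt e = b) \/ (esrc e = b /\ etgt e = a).

Definition incident (e : E X) (v : V X) : Prop := esrc e = v \/ etgt e = v.

Definition face_has_edge (f : F X) (e : E X) : Prop := exists i, fe f i = e.

Definition tet_data (a : i4 -> V X) (e : i4 -> i4 -> E X) : Prop :=
  (forall p q, p <> q -> a p <> a q) /\
  (forall p q, p <> q -> joins (e p q) (a p) (a q) /\ e p q = e q p).

(** face [ff p] is the face of the tetrahedron (a,e) opposite to vertex p *)
Definition tet_face (e : i4 -> i4 -> E X) (p : i4) (f : F X) : Prop :=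
  forall q r, q <> p -> r <> p -> q <> r -> face_has_edge f (e q r).

Definition is_tet_boundary (ff : i4 -> F X) : Prop :=
  exists a e, tet_data a e /\ forall p, tet_face e p (ff p).

Definition quasi_simplicial : Prop :=
  (forall e : E X, esrc e <> etgt e) /\
  (forall (f : F X) i j, i <> j -> fv f i <> fv f j) /\
  (forall f i, joins (fe f i) (fv f (nxt i)) (fv f (nxt (nxt i)))) /\
  (forall f g e1 e2, f <> g -> face_has_edge f e1 -> face_has_edge g e1 ->
       face_has_edge f e2 -> face_has_edge g e2 -> e1 = e2) /\
  (forall t, is_tet_boundary (tf t)).

Definition locally_finite : Prop :=
  (forall v : V X, exists l : list (E X), forall e, incident e v -> In e l) /\
  (forall e : E X, exists l : list (F X), forall f i, fe f i = e -> In f l) /\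
  (forall f : F X, exists l : list (T X), forall t p, tf t p = f -> In t l).

(** 3-flag: whenever X contains three faces of a tetrahedron (the faces
    opposite to vertices 1,2,3), it contains a 3-simplex having them as faces. *)
Definition three_flag : Prop :=
  forall (a : i4 -> V X) (e : i4 -> i4 -> E X) (ff : i4 -> F X),
    tet_data a e ->
    (forall p, p <> K0 -> tet_face e p (ff p)) ->
    exists t : T X, forall p, p <> K0 -> exists q, tf t q = ff p.

(** ** Simple connectivity, via combinatorial edge paths *)
Definition dart := (E X * bool)%type.
Definition dsrc (d : dart) : V X := if snd d then esrc (fst d) else etgt (fst d).
Definition dtgt (d : dart) : V X := if snd d then etgt (fst d) else esrc (fst d).
Definition dflip (d : dart) : dart := (fst d, negb (snd d)).

Fixpoint walk (x : V X) (p : list dart) (y : V X) : Prop :=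
  match p with
  | nil => x = y
  | d :: p' => dsrc d = x /\ walk (dtgt d) p' y
  end.

(** elementary homotopies: cancel a backtrack, or replace two sides of a
    2-simplex by the third side *)
Inductive elem_move : list dart -> list dart -> Prop :=
  | mv_back : forall p q d, elem_move (p ++ d :: dflip d :: q) (p ++ q)
  | mv_tri : forall p q f d1 d2 d3,
      fst d1 <> fst d2 -> fst d2 <> fst d3 -> fst d1 <> fst d3 ->
      face_has_edge f (fst d1) -> face_has_edge f (fst d2) ->
      face_has_edge f (fst d3) ->
      dsrc d1 = dsrc d3 -> dtgt d1 = dsrc d2 -> dtgt d2 = dtgt d3 ->
      elem_move (p ++ d1 :: d2 :: q) (p ++ d3 :: q).

Inductive homotopic (x y : V X) : list dart -> list dart -> Prop :=
  | ht_refl : forall p, homotopic x y p p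
  | ht_step : forall p q, walk x p y -> walk x q y -> elem_move p q ->
      homotopic x y p q
  | ht_sym : forall p q, homotopic x y p q -> homotopic x y q p
  | ht_trans : forall p q r, homotopic x y p q -> homotopic x y q r ->
      homotopic x y p r.

Definition simply_connected : Prop :=
  inhabited (V X) /\
  (forall x y : V X, exists p, walk x p y) /\
  (forall (x : V X) p, walk x p x -> homotopic x x p nil).

(** A corner is a pair (f,i) (the corner of the 2-simplex f at fv f i).
    In lk(v) the corner (f,i) with fv f i = v is an edge joining the
    vertices (edges of X) fe f (nxt i) and fe f (nxt (nxt i)). *)
Definition corner_joins (v : V X) (f : F X) (i : i3) (x y : E X) : Prop :=
  fv f i = v /\
  ((fe f (nxt i) = x /\ fe f (nxt (nxt i)) = y) \/
   (fe f (nxt i) = y /\ fe f (nxt (nxt i)) = x)).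

Definition weak_triangle_ineq (w : F X -> i3 -> R) : Prop :=
  forall v (x1 x2 x3 : E X) f12 i12 f23 i23 f13 i13,
    corner_joins v f12 i12 x1 x2 ->
    corner_joins v f23 i23 x2 x3 ->
    corner_joins v f13 i13 x1 x3 ->
    w f13 i13 <= w f12 i12 + w f23 i23.

Fixpoint sum_upto (g : nat -> R) (n : nat) : R :=
  match n with O => 0 | S m => sum_upto g m + g m end.

(** A simple cycle of length n > 3 in lk(v): vertices x 0..x (n-1)
    (pairwise distinct edges of X) and link edges (cf i, ci i) joining
    x i and x ((i+1) mod n). *)
Definition link_cycle (v : V X) (n : nat) (x : nat -> E X)
    (cf : nat -> F X) (ci : nat -> i3) : Prop :=
  (3 < n)%nat /\
  (forall i j, (i < n)%nat -> (j < n)%nat -> x i = x j -> i = j) /\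
  (forall i, (i < n)%nat -> corner_joins v (cf i) (ci i) (x i) (x (S i mod n))).

Definition cyc_adj (n i k : nat) : Prop := k = S i mod n \/ i = S k mod n.

(** 2-full: no edge of lk(v) joins two vertices of the cycle having a common
    neighbour in the cycle. *)
Definition two_full (v : V X) (n : nat) (x : nat -> E X) : Prop :=
  forall i j k, (i < n)%nat -> (j < n)%nat -> (k < n)%nat -> i <> j ->
    cyc_adj n i k -> cyc_adj n j k ->
    ~ exists f l, corner_joins v f l (x i) (x j).

Definition cycle_length (w : F X -> i3 -> R) (n : nat)
    (cf : nat -> F X) (ci : nat -> i3) : R :=
  sum_upto (fun i => w (cf i) (ci i)) n.

Definition PE_metric (len : E X -> R) : Prop :=
  (forall e, 0 < len e) /\
  (forall f i, len (fe f i) < len (fe f (nxt i)) + len (fe f (nxt (nxt i)))) /\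
  (exists l : list R, forall e, In (len e) l).

(** Euclidean angle at the corner (f,i) (law of cosines). *)
Definition angle (len : E X -> R) (f : F X) (i : i3) : R :=
  let a := len (fe f (nxt i)) in
  let b := len (fe f (nxt (nxt i))) in
  let c := len (fe f i) in
  acos ((a * a + b * b - c * c) / (2 * a * b)).

Definition metrically_strictly_systolic (len : E X -> R) : Prop :=
  quasi_simplicial /\ locally_finite /\ simply_connected /\ three_flag /\
  PE_metric len /\
  weak_triangle_ineq (angle len) /\
  (forall v n x cf ci, link_cycle v n x cf ci -> two_full v n x ->
      cycle_length (angle len) n cf ci > 2 * PI).

Definition angled (w : F X -> i3 -> R) : Prop :=
  quasi_simplicial /\ locally_finite /\
  (forall f i, 0 <= w f i) /\
  (exists l : list R, forall f i, In (w f i) l) /\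
  weak_triangle_ineq w.

Definition locally_2pi_large (w : F X -> i3 -> R) : Prop :=
  forall v n x cf ci, link_cycle v n x cf ci -> two_full v n x ->
    cycle_length w n cf ci >= 2 * PI.

Definition strictly_systolic_angled (w : F X -> i3 -> R) : Prop :=
  angled w /\ simply_connected /\ locally_2pi_large w /\ three_flag /\
  (forall f, w f J0 + w f J1 + w f J2 < PI).

End Defs.

From Pilot Require Import Defs.
From Stdlib Require Import Reals Lra Psatz List Lia.
Open Scope R_scope.

(* Take the Euclidean angles as weights: they satisfy the weak triangle
   inequality and sum to PI in every 2-simplex. The edge lengths, hence the
   angles, take finitely many positive values, so the strict bound "> 2 PI" on
   2-full link cycles holds with a uniform margin d: short cycles have only
   finitely many possible lengths, and long ones are long because every angle
   is at least the smallest angle. Rescaling all angles by 2 PI / (2 PI + d) < 1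
   keeps 2-full cycles at length >= 2 PI and pushes every angle sum below PI. *)

(* Sixteen times the squared area of a triangle with sides a, b, c. *)
Definition heron (a b c : R) : R := (a + b + c) * (- a + b + c) * (a - b + c) * (a + b - c).

Definition cos_rule (a b c : R) : R := (b * b + c * c - a * a) / (2 * b * c).

Lemma heron_pos a b c :
  0 < a -> 0 < b -> 0 < c -> a < b + c -> b < c + a -> c < a + b -> 0 < heron a b c.
Proof. intros; unfold heron; repeat apply Rmult_lt_0_compat; lra. Qed.

Lemma heron_cycle a b c : heron b c a = heron a b c.
Proof. unfold heron; ring. Qed.

Lemma cos_rule_sin a b c : 0 < b -> 0 < c -> 0 < heron a b c ->
  -1 < cos_rule a b c < 1 /\
  sqrt (1 - (cos_rule a b c)²) = sqrt (heron a b c) / (2 * b * c).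
Proof.
  intros hb hc hP.
  assert (hbc : 0 < 2 * b * c) by (apply Rmult_lt_0_compat; lra).
  assert (E : 1 - (cos_rule a b c)² = heron a b c / ((2 * b * c) * (2 * b * c))).
  { unfold cos_rule, heron, Rsqr; field; lra. }
  assert (H1 : 0 < 1 - (cos_rule a b c)²).
  { rewrite E; apply Rdiv_lt_0_compat, Rmult_lt_0_compat; assumption. }
  split.
  - unfold Rsqr in H1; split; nra.
  - rewrite E, sqrt_div_alt, sqrt_square; [reflexivity | lra |].
    apply Rmult_lt_0_compat; assumption.
Qed.

Lemma add_eq_PI_of_cos (A B C : R) :
  0 <= A <= PI -> 0 <= B <= PI -> 0 <= C <= PI ->
  0 < sin (A + B) -> cos (A + B) = - cos C -> A + B + C = PI.
Proof.
  intros hA hB hC hs hc.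
  assert (hAB : A + B <= PI).
  { destruct (Rle_or_lt (A + B) PI) as [h | h]; [exact h |].
    assert (sin (A + B) <= 0) by (apply sin_le_0; lra); lra. }
  rewrite <- Rtrigo_facts.cos_pi_minus in hc.
  apply cos_inj in hc; lra.
Qed.

Lemma triangle_angle_sum a b c :
  0 < a -> 0 < b -> 0 < c -> a < b + c -> b < c + a -> c < a + b ->
  acos (cos_rule a b c) + acos (cos_rule b c a) + acos (cos_rule c a b) = PI.
Proof.
  intros ha hb hc t1 t2 t3.
  assert (hP := heron_pos a b c ha hb hc t1 t2 t3).
  destruct (cos_rule_sin a b c hb hc hP) as [r1 s1].
  assert (hP2 : 0 < heron b c a) by (rewrite heron_cycle; exact hP).
  assert (hP3 : 0 < heron c a b) by (rewrite 2!heron_cycle; exact hP).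
  destruct (cos_rule_sin b c a hc ha hP2) as [r2 s2].
  destruct (cos_rule_sin c a b ha hb hP3) as [r3 _].
  rewrite heron_cycle in s2.
  set (K := sqrt (heron a b c)) in *.
  assert (hK : 0 < K) by (apply sqrt_lt_R0; lra).
  assert (KK : K * K = heron a b c) by (apply sqrt_sqrt; lra).
  apply add_eq_PI_of_cos; try (split; apply Rlt_le, acos_bound_lt; lra).
  - rewrite sin_plus, !cos_acos, !sin_acos, s1, s2 by lra.
    unfold cos_rule.
    replace (K / (2 * b * c) * ((c * c + a * a - b * b) / (2 * c * a)) +
             (b * b + c * c - a * a) / (2 * b * c) * (K / (2 * c * a)))
      with (K / (2 * a * b)) by (field; lra).
    apply Rdiv_lt_0_compat; nra.
  - rewrite cos_plus, !cos_acos, !sin_acos, s1, s2 by lra.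
    unfold cos_rule.
    replace (K / (2 * b * c) * (K / (2 * c * a))) with (K * K / (4 * a * b * c * c))
      by (field; lra).
    rewrite KK; unfold heron; field; lra.
Qed.

Lemma list_gap_above (t : R) (L : list R) :
  exists d, 0 < d /\ forall x, In x L -> t < x -> t + d <= x.
Proof.
  induction L as [| y L [d [hd H]]].
  - exists 1; split; [lra | intros x []].
  - destruct (Rle_or_lt y t) as [hy | hy].
    + exists d; split; [exact hd |].
      intros x [<- | hx] hxt; [lra | auto].
    + exists (Rmin d (y - t)); split; [apply Rmin_pos; lra |].
      assert (Rmin d (y - t) <= d) by apply Rmin_l.
      assert (Rmin d (y - t) <= y - t) by apply Rmin_r.
      intros x [<- | hx] hxt; [lra |].
      specialize (H x hx hxt); lra.
Qed.

Fixpoint list_sums (A : list R) (n : nat) : list R :=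
  match n with
  | O => 0 :: nil
  | S k => flat_map (fun s => map (fun a => s + a) A) (list_sums A k)
  end.

Lemma sum_upto_In_list_sums (A : list R) (g : nat -> R) (n : nat) :
  (forall i, (i < n)%nat -> In (g i) A) -> In (sum_upto g n) (list_sums A n).
Proof.
  induction n as [| n IH]; intros H; simpl; [auto |].
  apply in_flat_map; exists (sum_upto g n); split.
  - apply IH; intros; apply H; lia.
  - apply in_map, H; lia.
Qed.

Lemma sum_upto_lower_bound (g : nat -> R) (n : nat) (m : R) :
  (forall i, (i < n)%nat -> m <= g i) -> INR n * m <= sum_upto g n.
Proof.
  induction n as [| n IH]; intros H; simpl sum_upto; [simpl; lra |].
  rewrite S_INR.
  assert (m <= g n) by (apply H; lia).
  assert (INR n * m <= sum_upto g n) by (apply IH; intros; apply H; lia).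
  lra.
Qed.

Lemma sum_upto_scale (g : nat -> R) (n : nat) (c : R) :
  sum_upto (fun i => c * g i) n = c * sum_upto g n.
Proof. induction n as [| n IH]; simpl; [ring | rewrite IH; ring]. Qed.

Lemma sum_upto_excess_gap (A : list R) (t : R) :
  exists d, 0 < d /\ forall n g,
    (forall i, (i < n)%nat -> In (g i) A /\ 0 < g i) ->
    t < sum_upto g n -> t + d <= sum_upto g n.
Proof.
  destruct (list_gap_above 0 A) as [d0 [hd0 Hd0]].
  destruct (INR_archimed d0 (t + 1) hd0) as [N HN].
  destruct (list_gap_above t (flat_map (list_sums A) (seq 0 N))) as [d1 [hd1 Hd1]].
  exists (Rmin d1 1); split; [apply Rmin_pos; lra |].
  assert (Rmin d1 1 <= d1) by apply Rmin_l.
  assert (Rmin d1 1 <= 1) by apply Rmin_r.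
  intros n g Hg Ht.
  destruct (Nat.lt_ge_cases n N) as [hn | hn].
  - assert (Hin : In (sum_upto g n) (flat_map (list_sums A) (seq 0 N))).
    { apply in_flat_map; exists n; split; [apply in_seq; lia |].
      apply sum_upto_In_list_sums; intros i hi; apply Hg, hi. }
    specialize (Hd1 _ Hin Ht); lra.
  - assert (INR N <= INR n) by (apply le_INR; lia).
    assert (INR n * d0 <= sum_upto g n).
    { apply sum_upto_lower_bound; intros i hi.
      destruct (Hg i hi) as [hA hpos].
      specialize (Hd0 _ hA hpos); lra. }
    nra.
Qed.

Section Weights.
Variable X : Complex.

Lemma cycle_length_scale (w : F X -> i3 -> R) (c : R) n cf ci :
  cycle_length X (fun f i => c * w f i) n cf ci = c * cycle_length X w n cf ci.
Proof. apply sum_upto_scale. Qed.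

Lemma angled_scale (w : F X -> i3 -> R) (c : R) :
  0 <= c -> angled X w -> angled X (fun f i => c * w f i).
Proof.
  intros hc [QS [LF [Hnn [[l Hl] WTI]]]].
  split; [exact QS | split; [exact LF | split; [| split]]].
  - intros f i; apply Rmult_le_pos; auto.
  - exists (map (Rmult c) l); intros f i; apply in_map, Hl.
  - intros v x1 x2 x3 f12 i12 f23 i23 f13 i13 h12 h23 h13.
    rewrite <- Rmult_plus_distr_l.
    apply Rmult_le_compat_l; [exact hc | eapply WTI; eauto].
Qed.

Lemma two_full_cycle_gap (w : F X -> i3 -> R) :
  (exists l, forall f i, In (w f i) l) -> (forall f i, 0 < w f i) ->
  (forall v n x cf ci, link_cycle X v n x cf ci -> two_full X v n x ->
     cycle_length X w n cf ci > 2 * PI) ->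
  exists d, 0 < d /\ forall v n x cf ci, link_cycle X v n x cf ci ->
    two_full X v n x -> 2 * PI + d <= cycle_length X w n cf ci.
Proof.
  intros [l Hl] Hpos Hcyc.
  destruct (sum_upto_excess_gap l (2 * PI)) as [d [hd Hd]].
  exists d; split; [exact hd |].
  intros v n x cf ci Hlk Hfull.
  apply Hd; [intros i _; split; [apply Hl | apply Hpos] | apply Hcyc with v x; assumption].
Qed.

Variable len : E X -> R.
Hypothesis Hlen : PE_metric X len.

Lemma angle_range_finite : exists l, forall f i, In (angle X len f i) l.
Proof.
  destruct Hlen as [_ [_ [l Hl]]].
  exists (flat_map (fun a => flat_map (fun b => map (fun c =>
            acos ((a * a + b * b - c * c) / (2 * a * b))) l) l) l).
  intros f i; unfold angle.
  apply in_flat_map; eexists; split; [apply Hl |].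
  apply in_flat_map; eexists; split; [apply Hl |].
  apply in_map_iff; eexists; split; [reflexivity | apply Hl].
Qed.

Lemma angle_sides (f : F X) (i : i3) : let a := len (Defs.fe f i) in let b := len (Defs.fe f (nxt i)) in
  let c := len (Defs.fe f (nxt (nxt i))) in
  0 < a /\ 0 < b /\ 0 < c /\ a < b + c /\ b < c + a /\ c < a + b.
Proof.
  destruct Hlen as [Hpos [Htri _]]; simpl.
  assert (h2 := Htri f (nxt i)); assert (h3 := Htri f (nxt (nxt i))).
  replace (nxt (nxt (nxt i))) with i in * by (destruct i; reflexivity).
  repeat split; auto.
Qed.

Lemma angle_bounds (f : F X) (i : i3) : 0 < angle X len f i < PI.
Proof.
  destruct (angle_sides f i) as [ha [hb [hc [t1 [t2 t3]]]]].
  apply acos_bound_lt, (cos_rule_sin _ _ _ hb hc), heron_pos; assumption.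
Qed.

Lemma angle_sum (f : F X) : angle X len f J0 + angle X len f J1 + angle X len f J2 = PI.
Proof.
  destruct (angle_sides f J0) as [ha [hb [hc [t1 [t2 t3]]]]].
  exact (triangle_angle_sum _ _ _ ha hb hc t1 t2 t3).
Qed.

End Weights.

Theorem proposition2p13 (X : Complex) (len : E X -> R) :
  metrically_strictly_systolic X len ->
  exists w : F X -> i3 -> R, strictly_systolic_angled X w.
Proof.
  intros [QS [LF [SC [TF [Hlen [WTI Hcyc]]]]]].
  assert (Hang := angle_bounds X len Hlen).
  destruct (two_full_cycle_gap X (angle X len) (angle_range_finite X len Hlen)
              (fun f i => proj1 (Hang f i)) Hcyc) as [d [hd Hgap]].
  assert (hPI := PI_RGT_0).
  set (c := 2 * PI / (2 * PI + d)).
  assert (hc : c * (2 * PI + d) = 2 * PI) by (unfold c; field; lra).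
  assert (hc0 : 0 < c) by (unfold c; apply Rdiv_lt_0_compat; lra).
  exists (fun f i => c * angle X len f i).
  split; [| split; [exact SC | split; [| split; [exact TF |]]]].
  - apply angled_scale; [lra |].
    split; [exact QS | split; [exact LF | split; [| split]]].
    + intros f i; apply Rlt_le, Hang.
    + exact (angle_range_finite X len Hlen).
    + exact WTI.
  - intros v n x cf ci Hlk Hfull.
    rewrite cycle_length_scale.
    specialize (Hgap v n x cf ci Hlk Hfull); nra.
  - intros f; rewrite <- !Rmult_plus_distr_l, angle_sum by exact Hlen; nra.
Qed.
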